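(* Let $p$ be a prime and let $a_{g-1},\dots,a_0$ be integers with $|a_{g-1}p|>2g$ and $a_0$ not divisible by $p$. Set $q(x)=x^g+a_{g-1}px^{g-1}+\cdots+a_1px+a_0p$. Then $\mathrm{sym}(q)(x)=x^g\,q\!\left(x+\frac1x\right)$ satisfies the homological criterion, i.e. it is symplectically irreducible, is not a cyclotomic polynomial, and is not a polynomial in $x^k$ for any $k>1$.
   Context: A symplectic polynomial is an even-degree integer polynomial that is monic and palindromic (equivalently, the characteristic polynomial of an element of $\mathrm{Sp}(2n,\mathbb{Z})$). A symplectic polynomial is symplectically irreducible if it is not a product of two nontrivial symplectic polynomials. A cyclotomic polynomial is the minimal polynomial over $\mathbb{Q}$ of a primitive $n$-th root of unity. *)

From HB Require Import structures.
From mathcomp Require Import all_boot all_order all_algebra all_field.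
Set Implicit Arguments. Unset Strict Implicit. Unset Printing Implicit Defensive.
Import Order.TTheory GRing.Theory Num.Theory.
Local Open Scope ring_scope.

Definition palindromic (p : {poly int}) : Prop :=
  forall i : nat, (i <= (size p).-1)%N -> p`_i = p`_((size p).-1 - i).

Definition symplectic (p : {poly int}) : Prop :=
  p \is monic /\ ~~ odd (size p).-1 /\ palindromic p.

Definition symplectically_irreducible (p : {poly int}) : Prop :=
  symplectic p /\ (1 < size p)%N /\
  ~ (exists f h : {poly int}, symplectic f /\ symplectic h /\
        (1 < size f)%N /\ (1 < size h)%N /\ p = f * h).

(* p is the minimal polynomial over Q of a primitive n-th root of unity;
   MathComp's 'Phi_n is this polynomial (with integer coefficients) *)
Definition is_cyclotomic (p : {poly int}) : Prop :=
  exists2 n : nat, (0 < n)%N & p = 'Phi_n.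

Definition poly_in_Xk (p : {poly int}) (k : nat) : Prop :=
  exists r : {poly int}, p = r \Po 'X^k.

(* sym(q)(x) = x^g q(x + 1/x), g = deg q *)
Definition symp (q : {poly int}) : {poly int} :=
  \sum_(i < size q) q`_i *: ('X^((size q).-1 - i) * ('X^2 + 1) ^+ i).

Definition homological_criterion (p : {poly int}) : Prop :=
  symplectically_irreducible p /\ ~ is_cyclotomic p /\
  (forall k : nat, (1 < k)%N -> ~ poly_in_Xk p k).

From mathcomp Require Import all_boot all_order all_algebra all_field.
From mathcomp Require Import zify ring.
Import Order.TTheory GRing.Theory Num.Theory.
Set Implicit Arguments. Unset Strict Implicit. Unset Printing Implicit Defensive.
Local Open Scope ring_scope.

(* Let F = symp q, so that F(x) = x^g q(x + 1/x). The palindromic polynomials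
   of degree at most 2m are exactly the images [symn m r] of the polynomials r
   of degree at most m, and [symn] is injective and multiplicative; hence a
   factorisation of F into symplectic polynomials comes from a factorisation
   of q, which is impossible as q is Eisenstein at p. The coefficient of
   x^(2g-1) in F is a_(g-1) p, whereas in a cyclotomic polynomial of degree 2g
   it is minus a sum of 2g roots of unity, of absolute value at most 2g.
   Finally F has nonzero coefficients in the consecutive degrees 2g-1 and 2g,
   so it is not a polynomial in x^k for any k > 1. *)

Lemma size_poly_coef_neq0 (R : nzSemiRingType) (p : {poly R}) n :
  (size p <= n.+1)%N -> p`_n != 0 -> size p = n.+1.
Proof.
move=> size_p p_n; apply/anti_leq; rewrite size_p ltnNge.
by apply: contra p_n => /leq_sizeP ->.
Qed.

Lemma size_Xnadd_poly (R : nzSemiRingType) n (E : nat -> R) :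
  size ('X^n + \poly_(i < n) E i) = n.+1.
Proof. by rewrite size_polyDl size_polyXn // ltnS size_poly. Qed.

Lemma coef_Xnadd_poly (R : nzSemiRingType) n (E : nat -> R) i :
  (i < n)%N -> ('X^n + \poly_(i < n) E i)`_i = E i.
Proof. by move=> i_lt; rewrite coefD coefXn ltn_eqF // coef_poly i_lt add0r. Qed.

Lemma monic_Xnadd_poly (R : nzSemiRingType) n (E : nat -> R) :
  'X^n + \poly_(i < n) E i \is monic.
Proof.
by rewrite monicE lead_coefE size_Xnadd_poly coefD coefXn eqxx coef_poly ltnn addr0.
Qed.

Lemma eisenstein_Xnadd_poly (p n : nat) (a : nat -> int) :
  prime p -> (0 < n)%N -> ~~ (p%:Z %| a 0%N)%Z ->
  irreducible_poly ('X^n + \poly_(i < n) (a i * p%:Z)).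
Proof.
move=> p_prime n_gt0 a0_ndvd.
apply: (eisenstein_crit p_prime); rewrite ?size_Xnadd_poly.
- by rewrite eqSS -lt0n.
- by rewrite (monicP (monic_Xnadd_poly _ _)) dvdz1 neq_ltn prime_gt1 ?orbT.
- by rewrite coef_Xnadd_poly // expr2 PoszM dvdz_mul2r // eqz_nat -lt0n prime_gt0.
- by move=> i i_lt; rewrite coef_Xnadd_poly // dvdz_mull.
Qed.

Lemma irredp_mul_size1 (R : idomainType) (r s : {poly R}) :
  irreducible_poly (r * s) -> size r = 1%N \/ size s = 1%N.
Proof.
move=> irr_rs; have [size_r1|r_neq1] := eqVneq (size r) 1%N; first by left.
right; have rs_neq0 := irredp_neq0 irr_rs.
have r_neq0 : r != 0 by apply: contraNneq rs_neq0 => ->; rewrite mul0r.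
have s_neq0 : s != 0 by apply: contraNneq rs_neq0 => ->; rewrite mulr0.
have := eqp_size (irr_rs.2 r r_neq1 (dvdp_mulIl r s)).
rewrite size_mul // => size_rE; move: (r_neq0); rewrite -size_poly_gt0; lia.
Qed.

Lemma norm_coef_prod_XsubC_subtop (R : numDomainType) (s : seq R) :
  (0 < size s)%N -> all (fun c => `|c| <= 1) s ->
  `|(\prod_(c <- s) ('X - c%:P))`_(size s).-1| <= (size s)%:R.
Proof.
move=> s_gt0 s_le1; rewrite coefPn_prod_XsubC -?lt0n // normrN.
rewrite (le_trans (ler_norm_sum _ _ _)) // -sum1_size natr_sum !big_seq.
by apply: ler_sum => c /(allP s_le1).
Qed.

Lemma norm_coef_Cyclotomic_subtop n :
  (0 < n)%N -> `|('Phi_n)`_(totient n).-1| <= (totient n)%:Z.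
Proof.
move=> n_gt0; have [z prim_z] := C_prim_root_exists n_gt0.
have norm_z : `|z| = 1.
  apply/eqP; rewrite -(pexpr_eq1 (prim_order_gt0 prim_z)) ?normr_ge0 //.
  by rewrite -normrX prim_expr_order // normr1.
pose s := [seq z ^+ k | k : 'I_n <- index_enum 'I_n & coprime k n].
have PhiE : map_poly (intr : int -> algC) 'Phi_n = \prod_(c <- s) ('X - c%:P).
  by rewrite (Cintr_Cyclotomic prim_z) /s big_map big_filter.
have size_s : size s = totient n.
  apply: succn_inj; rewrite -size_Cyclotomic.
  by rewrite -(size_map_inj_poly (@intr_inj algC) (rmorph0 _)) PhiE size_prod_XsubC.
rewrite -(ler_int algC) intr_norm -coef_map /= PhiE -size_s.
apply: norm_coef_prod_XsubC_subtop; first by rewrite size_s totient_gt0.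
by apply/allP => _ /mapP [k _ ->]; rewrite normrX norm_z expr1n.
Qed.

Lemma consecutive_coefs_not_poly_in_Xk (f : {poly int}) i k :
  f`_i != 0 -> f`_i.+1 != 0 -> (1 < k)%N -> ~ poly_in_Xk f k.
Proof.
move=> f_i f_i1 k_gt1 [r fE].
have dvd_k j : f`_j != 0 -> (k %| j)%N.
  by rewrite fE coef_comp_poly_Xn 1?ltnW //; case: ifP; rewrite ?eqxx.
move: (dvd_k _ f_i1); rewrite -addn1 (dvdn_addr _ (dvd_k _ f_i)) dvdn1 => /eqP k1.
by rewrite k1 in k_gt1.
Qed.

Section SymTransform.

Variable R : idomainType.
Implicit Types (r s f : {poly R}) (c : R).

Local Notation U := ('X^2 + 1 : {poly R}).

Lemma monic_exp_X2D1 k : U ^+ k \is monic.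
Proof. by apply: monic_exp; rewrite -polyC1 monicXnaddC. Qed.

Lemma size_exp_X2D1 k : size (U ^+ k) = (2 * k).+1.
Proof.
have := size_exp U k; rewrite -polyC1 size_XnaddC // mulnC => <-.
by rewrite prednK // size_poly_gt0 monic_neq0 // polyC1 monic_exp_X2D1.
Qed.

Lemma coef_exp_X2D1_top k : (U ^+ k)`_(2 * k) = 1.
Proof. by have := monicP (monic_exp_X2D1 k); rewrite lead_coefE size_exp_X2D1. Qed.

Lemma coef0_exp_X2D1 k : (U ^+ k)`_0 = 1.
Proof. by rewrite -horner_coef0 horner_exp !hornerE expr0n add0r expr1n. Qed.

Lemma coef_exp_X2D1_odd k i : odd i -> (U ^+ k)`_i = 0.
Proof.
have -> : U ^+ k = ('X + 1) ^+ k \Po 'X^2.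
  by rewrite rmorphXn /= comp_polyD comp_polyX -polyC1 comp_polyC.
by move=> odd_i; rewrite coef_comp_poly_Xn // dvdn2 odd_i.
Qed.

(* [symn m r] is [X^m r(X + X^-1)] (see [evalQ_symn]); unlike [symp], the
   degree [m] is a parameter. *)
Definition symn m r := \sum_(i < m.+1) r`_i *: ('X^(m - i) * U ^+ i).

Lemma symn0 r : symn 0 r = (r`_0)%:P.
Proof. by rewrite /symn big_ord1 subnn !expr0 mulr1 -alg_polyC. Qed.

Lemma symnS m r : symn m.+1 r = r`_m.+1 *: U ^+ m.+1 + 'X * symn m r.
Proof.
rewrite /symn big_ord_recr /= subnn mul1r addrC mulr_sumr; congr (_ + _).
by apply: eq_bigr => i _; rewrite subSn 1?exprS -?scalerAr ?mulrA // -ltnS.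
Qed.

Lemma symnB m r s : symn m (r - s) = symn m r - symn m s.
Proof. by rewrite /symn -sumrB; apply: eq_bigr => i _; rewrite coefB scalerBl. Qed.

Lemma eq_symn m r s : (forall i, (i <= m)%N -> r`_i = s`_i) -> symn m r = symn m s.
Proof. by move=> eq_rs; apply: eq_bigr => i _; rewrite eq_rs // -ltnS. Qed.

Lemma size_symn m r : (size (symn m r) <= (2 * m).+1)%N.
Proof.
elim: m => [|m IHm]; first by rewrite symn0 size_polyC leq_b1.
rewrite symnS (leq_trans (size_polyD _ _)) // geq_max.
rewrite (leq_trans (size_scale_leq _ _)) ?size_exp_X2D1 //=.
by rewrite (leq_trans (size_polyMleq _ _)) // size_polyX; lia.
Qed.

Lemma coef_symn_top m r : (symn m r)`_(2 * m) = r`_m.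
Proof.
case: m => [|m]; first by rewrite symn0 coefC.
rewrite symnS coefD coefZ coef_exp_X2D1_top mulr1 coefXM muln_eq0 /=.
rewrite [X in _ + X]nth_default ?addr0 //.
by apply: leq_trans (size_symn m r) _; lia.
Qed.

Lemma coef_symn_subtop m r : (symn m.+1 r)`_(2 * m).+1 = r`_m.
Proof.
rewrite symnS coefD coefZ coef_exp_X2D1_odd; last by rewrite /= oddM.
by rewrite mulr0 add0r coefXM coef_symn_top.
Qed.

Lemma coef0_symn m r : (symn m r)`_0 = r`_m.
Proof.
case: m => [|m]; first by rewrite symn0 coefC.
by rewrite symnS coefD coefZ coef0_exp_X2D1 mulr1 coefXM addr0.
Qed.

Lemma symn_eq0 m r : (size r <= m.+1)%N -> symn m r = 0 -> r = 0.
Proof.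
elim: m r => [|m IHm] r size_r.
  by rewrite symn0 => r0; rewrite (size1_polyC size_r).
move=> symn_r0; have r_top : r`_m.+1 = 0 by rewrite -coef0_symn symn_r0 coef0.
have size_r' : (size r <= m.+1)%N.
  apply/leq_sizeP => i; rewrite leq_eqVlt => /predU1P [<- // | i_gt].
  by move/leq_sizeP: size_r; apply.
apply: IHm => //.
apply/polyP => i; have := congr1 (fun P : {poly R} => P`_i.+1) symn_r0.
by rewrite symnS r_top scale0r add0r coefXM !coef0.
Qed.

(* Reversal of the coefficients of degree <= n; [revn n f = f] says that f is
   palindromic of degree n, including [size f <= n.+1]. *)
Definition revn n f := \poly_(i < n.+1) f`_(n - i).

Lemma revnB n f s : revn n (f - s) = revn n f - revn n s.
Proof. by apply/polyP => i; rewrite coefB !coef_poly coefB; case: ifP; rewrite ?subr0. Qed.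

Lemma revnZ n c f : revn n (c *: f) = c *: revn n f.
Proof. by apply/polyP => i; rewrite coefZ !coef_poly coefZ; case: ifP; rewrite ?mulr0. Qed.

End SymTransform.

Local Notation U := ('X^2 + 1 : {poly int}).
Implicit Types (q r s f h P Q : {poly int}).

Definition evalQ (x : rat) : {rmorphism {poly int} -> rat} :=
  horner_morph (fun a : int => mulrC x a%:~R).

Lemma evalQE x P : evalQ x P = (map_poly intr P).[x].
Proof. by []. Qed.

Lemma evalQX x : evalQ x 'X = x.
Proof. exact: horner_morphX. Qed.

Lemma evalQC x c : evalQ x c%:P = c%:~R.
Proof. exact: horner_morphC. Qed.

Lemma size_map_intr P : size (map_poly (intr : int -> rat) P) = size P.
Proof. exact: size_map_inj_poly (@intr_inj rat) _ _. Qed.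

Lemma evalQ_horner_wide x n P : (size P <= n)%N ->
  evalQ x P = \sum_(i < n) (P`_i)%:~R * x ^+ i.
Proof.
move=> size_P; rewrite evalQE (horner_coef_wide (n := n)) ?size_map_intr //.
by apply: eq_bigr => i _; rewrite coef_map.
Qed.

Lemma eq_poly_int_pos P Q :
  (forall x : rat, 0 < x -> evalQ x P = evalQ x Q) -> P = Q.
Proof.
move=> eqPQ; apply: (map_inj_poly (@intr_inj rat) (rmorph0 _)); apply/eqP.
rewrite -subr_eq0 -rmorphB; apply/eqP.
apply: (roots_geq_poly_eq0 (rs := [seq i.+1%:R | i <- iota 0 (size (P - Q))])).
- apply/allP => _ /mapP [i _ ->]; rewrite /root -evalQE rmorphB /=.
  by rewrite eqPQ ?subrr ?ltr0Sn.
- by rewrite map_inj_uniq ?iota_uniq // => i j /eqP; rewrite eqr_nat eqSS => /eqP.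
- by rewrite size_map size_iota size_map_intr.
Qed.

Lemma evalQ_revn x n f : x != 0 -> (size f <= n.+1)%N ->
  evalQ x (revn n f) = x ^+ n * evalQ x^-1 f.
Proof.
move=> x_neq0 size_f.
rewrite (evalQ_horner_wide _ size_f) (evalQ_horner_wide _ (size_poly _ _)).
rewrite mulr_sumr [RHS](reindex_inj rev_ord_inj); apply: eq_bigr => i _ /=.
have i_le_n : (i <= n)%N by rewrite -ltnS.
have -> : x ^+ n = x ^+ (n - i) * x ^+ i by rewrite -exprD subnK.
rewrite coef_poly ltn_ord subSS exprVn.
by field; rewrite expf_neq0.
Qed.

Lemma revn_id_evalQ n f : (size f <= n.+1)%N ->
  (forall x : rat, 0 < x -> x ^+ n * evalQ x^-1 f = evalQ x f) -> revn n f = f.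
Proof.
move=> size_f pal_f; apply: eq_poly_int_pos => x x_gt0.
by rewrite evalQ_revn ?pal_f ?gt_eqF.
Qed.

Lemma evalQ_exp_X2D1 x k : evalQ x (U ^+ k) = (x ^+ 2 + 1) ^+ k.
Proof. by rewrite rmorphXn rmorphD rmorphXn rmorph1 evalQX. Qed.

Lemma evalQ_symn x m r : x != 0 -> (size r <= m.+1)%N ->
  evalQ x (symn m r) = x ^+ m * evalQ (x + x^-1) r.
Proof.
move=> x_neq0 size_r; rewrite (evalQ_horner_wide _ size_r) rmorph_sum mulr_sumr.
apply: eq_bigr => i _; have i_le_m : (i <= m)%N by rewrite -ltnS.
rewrite -mul_polyC !rmorphM /= evalQC rmorphXn evalQX evalQ_exp_X2D1.
have -> : x ^+ m = x ^+ (m - i) * x ^+ i by rewrite -exprD subnK.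
have -> : x ^+ 2 + 1 = x * (x + x^-1) by rewrite mulrDr mulfV // expr2.
by rewrite exprMn; ring.
Qed.

Lemma revn_exp_X2D1 k : revn (2 * k) (U ^+ k) = U ^+ k.
Proof.
apply: revn_id_evalQ => [|x x_gt0]; first by rewrite size_exp_X2D1.
rewrite !evalQ_exp_X2D1 exprM -exprMn mulrDr mulr1 -exprMn mulfV ?gt_eqF //.
by rewrite expr1n addrC.
Qed.

Lemma revn_symn m r : (size r <= m.+1)%N -> revn (2 * m) (symn m r) = symn m r.
Proof.
move=> size_r; apply: revn_id_evalQ => [|x x_gt0]; first exact: size_symn.
have x_neq0 : x != 0 by rewrite gt_eqF.
rewrite !evalQ_symn ?invr_eq0 // invrK addrC mul2n -addnn exprD exprVn.
by rewrite -mulrA mulVKf ?expf_neq0.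
Qed.

Lemma symn_mul m n r s : (size r <= m.+1)%N -> (size s <= n.+1)%N ->
  symn m r * symn n s = symn (m + n) (r * s).
Proof.
move=> size_r size_s; apply: eq_poly_int_pos => x x_gt0.
have x_neq0 : x != 0 by rewrite gt_eqF.
have size_rs : (size (r * s)%R <= (m + n).+1)%N.
  by rewrite (leq_trans (size_polyMleq _ _)) //; lia.
by rewrite rmorphM /= !evalQ_symn // rmorphM exprD; ring.
Qed.

Lemma symn_of_revn_id m f :
  revn (2 * m) f = f -> exists2 r : {poly int}, (size r <= m.+1)%N & f = symn m r.
Proof.
(* Peel off [f`_0 (X^2 + 1)^m] and divide the remainder by X. *)
elim: m f => [|m IHm] f rev_f.
  have size_f : (size f <= 1)%N by rewrite -rev_f size_poly.
  by exists f; rewrite // symn0 -size1_polyC.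
set c := f`_0; set h := f - c *: U ^+ m.+1.
have rev_h : revn (2 * m.+1) h = h by rewrite revnB revnZ rev_f revn_exp_X2D1.
have h0 : h`_0 = 0 by rewrite coefB coefZ coef0_exp_X2D1 mulr1 subrr.
pose h' := \poly_(i < (2 * m).+1) h`_i.+1.
have hE : h = 'X * h'.
  apply/polyP => -[|i]; rewrite coefXM // coef_poly /=.
  case: ltnP => // i_ge; rewrite -rev_h coef_poly; case: ltnP => // i_lt.
  by have -> : (2 * m.+1 - i.+1 = 0)%N by lia.
have rev_h' : revn (2 * m) h' = h'.
  apply/polyP => i; rewrite coef_poly [RHS]coef_poly; case: ltnP => // i_lt.
  rewrite coef_poly ifT; last by lia.
  by rewrite -[in RHS]rev_h coef_poly ifT; [congr (h`_ _); lia | lia].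
have [r' size_r' h'E] := IHm h' rev_h'.
exists (r' + c *: 'X^(m.+1)).
  rewrite (leq_trans (size_polyD _ _)) // geq_max (leq_trans size_r') //=.
  by rewrite (leq_trans (size_scale_leq _ _)) // size_polyXn.
rewrite symnS coefD coefZ coefXn eqxx mulr1 [r'`_m.+1]nth_default // add0r.
rewrite (@eq_symn _ m _ r') => [|i i_le]; last first.
  by rewrite coefD coefZ coefXn ltn_eqF ?mulr0 ?addr0.
by rewrite -h'E -hE /h addrC subrK.
Qed.

Lemma palindromic_revnE f : palindromic f <-> revn (size f).-1 f = f.
Proof.
split=> [pal_f | rev_f i i_le]; last by rewrite -{1}rev_f coef_poly ltnS i_le.
apply/polyP => i; rewrite coef_poly; case: ltnP => [i_lt | i_ge].
  by rewrite [RHS]pal_f // -ltnS.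
by rewrite nth_default // (leq_trans (leqSpred _) i_ge).
Qed.

Lemma symp_symn q : symp q = symn (size q).-1 q.
Proof.
have [->|q_neq0] := eqVneq q 0; first by rewrite /symp size_poly0 big_ord0 symn0 coef0.
by rewrite /symp /symn prednK // size_poly_gt0.
Qed.

Lemma size_symp q : q != 0 -> size (symp q) = (2 * (size q).-1).+1.
Proof.
move=> q_neq0; rewrite symp_symn; apply: size_poly_coef_neq0; first exact: size_symn.
by rewrite coef_symn_top -lead_coefE lead_coef_eq0.
Qed.

Lemma coef_symp_subtop q :
  (1 < size q)%N -> (symp q)`_(2 * (size q).-1).-1 = q`_(size q).-2.
Proof.
rewrite symp_symn; case: (size q) => [|[|m]] // _.
have -> : ((2 * m.+2.-1).-1 = (2 * m).+1)%N by lia.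
exact: coef_symn_subtop.
Qed.

Lemma symp_symplectic q : q \is monic -> symplectic (symp q).
Proof.
move=> q_monic; have size_F := size_symp (monic_neq0 q_monic).
split; [|split].
- by rewrite monicE lead_coefE size_F symp_symn coef_symn_top -lead_coefE.
- by rewrite size_F /= oddM.
- by apply/palindromic_revnE; rewrite size_F /= symp_symn revn_symn // leqSpred.
Qed.

Lemma symplectic_symn f : symplectic f ->
  exists m r, [/\ size f = (2 * m).+1, size r = m.+1 & f = symn m r].
Proof.
case=> f_monic [even_f /palindromic_revnE rev_f].
set m := ((size f).-1)./2.
have size_f : size f = (2 * m).+1.
  have := odd_double_half (size f).-1; rewrite (negbTE even_f) add0n -/m mul2n => ->.
  by rewrite prednK // size_poly_gt0 monic_neq0.
move: rev_f; rewrite size_f /= => /symn_of_revn_id [r size_r fE].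
have r_top : r`_m = 1 by rewrite -coef_symn_top -fE -(monicP f_monic) lead_coefE size_f.
by exists m, r; split => //; apply: size_poly_coef_neq0; rewrite ?r_top ?oner_neq0.
Qed.

Lemma symp_symplectic_factor q f h :
  symplectic f -> symplectic h -> symp q = f * h ->
  exists r s, [/\ q = r * s, size f = (2 * (size r).-1).+1
                         & size h = (2 * (size s).-1).+1].
Proof.
move=> sympl_f sympl_h qE.
have [m [r [size_f size_r fE]]] := symplectic_symn sympl_f.
have [n [s [size_h size_s hE]]] := symplectic_symn sympl_h.
have f_neq0 := monic_neq0 sympl_f.1; have h_neq0 := monic_neq0 sympl_h.1.
have q_neq0 : q != 0.
  apply: contraNneq (mulf_neq0 f_neq0 h_neq0) => q0.
  by rewrite -qE q0 /symp size_poly0 big_ord0.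
have size_q : (size q).-1 = (m + n)%N.
  by have := size_symp q_neq0; rewrite qE size_mul // size_f size_h; lia.
exists r, s; split; rewrite ?size_r ?size_s //.
apply/eqP; rewrite -subr_eq0; apply/eqP; apply: (@symn_eq0 _ (m + n)).
  rewrite (leq_trans (size_polyD _ _)) // geq_max size_polyN -size_q leqSpred size_q /=.
  by rewrite (leq_trans (size_polyMleq _ _)) // size_r size_s; lia.
by rewrite symnB -size_q -symp_symn qE fE hE symn_mul ?size_r ?size_s // size_q subrr.
Qed.

Unset Implicit Arguments.

Theorem proposition3p5 (p : nat) (g : nat) (a : nat -> int) :
  prime p -> (0 < g)%N ->
  (2 * g)%:Z < `|a g.-1 * p%:Z| ->
  ~~ (p%:Z %| a 0%N)%Z ->
  homological_criterion
    (symp ('X^g + \sum_(i < g) (a i * p%:Z) *: 'X^i)).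
Proof.
move=> p_prime g_gt0 a_big a0_ndvd; rewrite -(poly_def g (fun i => a i * p%:Z)).
set q := _ + _; set F := symp q.
have q_monic : q \is monic := monic_Xnadd_poly _ _.
have size_F : size F = (2 * g).+1 by rewrite size_symp ?monic_neq0 // size_Xnadd_poly.
have F_top : F`_(2 * g) = 1.
  by rewrite -(monicP (symp_symplectic q_monic).1) lead_coefE size_F.
have F_subtop : F`_(2 * g).-1 = a g.-1 * p%:Z.
  rewrite -[g in LHS]/(g.+1.-1) -(size_Xnadd_poly g (fun i => a i * p%:Z)).
  by rewrite coef_symp_subtop size_Xnadd_poly // coef_Xnadd_poly // prednK.
have q_irr : irreducible_poly q by apply: eisenstein_Xnadd_poly.
split; [split; [exact: symp_symplectic | split] | split].
- by rewrite size_F; lia.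
- case=> f [h [f_symp [h_symp [f_gt1 [h_gt1 FE]]]]].
  have [r [s [qE size_f size_h]]] := symp_symplectic_factor f_symp h_symp FE.
  rewrite qE in q_irr; have [size_r1 | size_s1] := irredp_mul_size1 q_irr.
    by move: f_gt1; rewrite size_f size_r1.
  by move: h_gt1; rewrite size_h size_s1.
- case=> n n_gt0 PhiE; have := norm_coef_Cyclotomic_subtop n_gt0.
  have -> : totient n = (2 * g)%N by apply: succn_inj; rewrite -size_Cyclotomic -PhiE.
  by rewrite -PhiE F_subtop leNgt a_big.
- move=> k k_gt1; apply: (consecutive_coefs_not_poly_in_Xk (i := (2 * g).-1)) => //.
    by rewrite F_subtop -normr_gt0 (le_lt_trans _ a_big).
  by rewrite prednK ?F_top // muln_gt0.
Qed.
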